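(* Let $p$ be a prime, $X$ a compact space, and $q\in\mathbb{N}$ a prime different from $p$. Then for all $f,g\in C(X,\mathbb{Q}_p)$: $g|^*f$ if and only if there exists $h\in C(X,\mathbb{Q}_p)$ with $h^q=g^q+pf^q$.
   Context: $C(X,\mathbb{Q}_p)$ is the ring of continuous functions $X\to\mathbb{Q}_p$. The canonical $p$-adic divisibility $|^*$ on it is defined by $g|^*f\Leftrightarrow v_p(g(x))\le v_p(f(x))$ for all $x\in X$, where $v_p$ is the $p$-adic valuation (with $v_p(0)=\infty$). *)

From HB Require Import structures.
From mathcomp Require Import all_boot all_order all_algebra.
From mathcomp Require Import all_classical all_reals all_analysis.
Set Implicit Arguments. Unset Strict Implicit. Unset Printing Implicit Defensive.
Import Order.TTheory GRing.Theory Num.Theory.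
Local Open Scope ring_scope.
Local Open Scope ereal_scope.

Definition vp_rat (p : nat) (r : rat) : \bar int :=
  if r == 0%R then +oo
  else (((logn p `|numq r|%N)%:Z - (logn p `|denq r|%N)%:Z)%R)%:E.

(* A field of p-adic numbers Q_p: a field K with a valuation
   v_p : K -> Z u {+oo} extending the p-adic valuation of Q, in which
   Q is dense and which is complete, i.e. K is the completion of Q
   for the p-adic valuation (this determines Q_p up to unique
   isometric field isomorphism). *)
Record padic_field (p : nat) := PadicField {
  Qp_car :> fieldType;
  vp : Qp_car -> \bar int;
  vp_eq_pinfty : forall x, (vp x == +oo) = (x == 0%R);
  vp_neq_ninfty : forall x, vp x != -oo;
  vpM : forall x y, vp (x * y)%R = vp x + vp y;
  vpD : forall x y, Order.min (vp x) (vp y) <= vp (x + y)%R;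
  vp_ratr : forall r : rat, vp (ratr r) = vp_rat p r;
  vp_dense : forall (x : Qp_car) (n : int),
     exists r : rat, n%:E <= vp (x - ratr r)%R;
  vp_complete : forall u : nat -> Qp_car,
     (forall n : int, exists N : nat, forall i j : nat, (N <= i)%N -> (N <= j)%N ->
        n%:E <= vp (u i - u j)%R) ->
     exists l : Qp_car, forall n : int, exists N : nat, forall i : nat, (N <= i)%N ->
        n%:E <= vp (u i - l)%R
}.

Definition pcont (p : nat) (Qp : padic_field p) (X : topologicalType)
    (f : X -> Qp) : Prop :=
  forall (x : X) (n : int), \forall y \near x, n%:E <= vp (f y - f x)%R.

Definition pdivides (p : nat) (Qp : padic_field p) (X : Type)
    (g f : X -> Qp) : Prop :=
  forall x : X, vp (g x) <= vp (f x).

(* If [vp g <= vp f] everywhere, then [a := 1 + p (f / g) ^+ q] takes values in the principal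
   units [1 + p Z_p].  As [q] is prime to [p], Newton's iteration (Hensel's lemma) gives each
   principal unit a unique principal [q]-th root, and the map [y ^+ q] on principal units is
   isometric, so the root [s] of [a] depends continuously on [a]; then [h := g * s] works
   (it vanishes where [g] does, and is continuous there because [s] is bounded).
   Conversely, if [vp (g x) > vp (f x) = c] then [vp (h x ^+ q) = 1 + q c], which is not a
   multiple of [q]. *)
From HB Require Import structures.
From mathcomp Require Import all_boot all_order all_algebra.
From mathcomp Require Import all_classical all_reals all_analysis.
From mathcomp Require Import ring zify.
Import Order.TTheory GRing.Theory Num.Theory.
Set Implicit Arguments. Unset Strict Implicit. Unset Printing Implicit Defensive.
Local Open Scope ring_scope.
Local Open Scope classical_set_scope.

Section PadicValuation.
Variables (p : nat) (Qp : padic_field p).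
Implicit Types (x y a b : Qp) (c m n : int).

Lemma vp0 : vp (0 : Qp) = +oo%E.
Proof. by apply/eqP; rewrite vp_eq_pinfty. Qed.

Lemma vp_finite x : x != 0 -> exists c, vp x = c%:E.
Proof.
move=> x_neq0; case E: (vp x) => [c| |]; first by exists c.
- by move/eqP: E; rewrite vp_eq_pinfty (negbTE x_neq0).
- by have := vp_neq_ninfty x; rewrite E.
Qed.

Lemma vp_natr (m : nat) : (0 < m)%N -> vp (m%:R : Qp) = (logn p m)%:Z%:E.
Proof.
move=> m_gt0; have := vp_ratr Qp (m%:Z)%:~R; rewrite ratr_int /= => ->.
rewrite /vp_rat numq_int denq_int intr_eq0 eqz_nat (gtn_eqF m_gt0) /=.
by rewrite logn1 subr0.
Qed.

Lemma vp_natr_prime : prime p -> vp (p%:R : Qp) = 1%:E.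
Proof. by move=> p_prime; rewrite vp_natr ?prime_gt0 // logn_prime // eqxx. Qed.

Lemma vp1 : vp (1 : Qp) = 0%:E.
Proof. by rewrite -[1]/(1%:R) vp_natr // logn1. Qed.

Lemma vpN x : vp (- x) = vp x.
Proof.
have vpN1 : vp (-1 : Qp) = 0%:E.
  have := vp_ratr Qp (-1)%:~R; rewrite ratr_int => /= ->.
  by rewrite /vp_rat /= logn1.
by rewrite -mulN1r vpM vpN1 add0e.
Qed.

Lemma vpX x c (k : nat) : vp x = c%:E -> vp (x ^+ k) = (c *+ k)%:E.
Proof.
move=> vx; elim: k => [|k IHk]; first by rewrite expr0 vp1.
by rewrite exprS vpM vx IHk -EFinD mulrS.
Qed.

Lemma vpV x c : vp x = c%:E -> vp x^-1 = (- c)%:E.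
Proof.
move=> vx; have x_neq0 : x != 0 by rewrite -vp_eq_pinfty vx.
have := vpM x x^-1; rewrite divff // vp1 vx.
case: (vp x^-1) => [m| |] //= /esym/eqP.
by rewrite -EFinD eqe addrC addr_eq0 => /eqP ->.
Qed.

Definition vpge x n : Prop := (n%:E <= vp x)%E.

Lemma vpgeE x c n : vp x = c%:E -> vpge x n <-> n <= c.
Proof. by move=> vx; rewrite /vpge vx lee_fin. Qed.

Lemma vpge_vp x c : vp x = c%:E -> vpge x c.
Proof. by move=> vx; rewrite (vpgeE _ vx). Qed.

Lemma vpge0 n : vpge 0 n.
Proof. by rewrite /vpge vp0 leey. Qed.

Lemma vpge_exists x : exists k, vpge x k.
Proof.
have [->|/vp_finite[c vx]] := eqVneq x 0; first by exists 0; apply: vpge0.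
by exists c; rewrite (vpgeE _ vx).
Qed.

Lemma vpgeW x m n : m <= n -> vpge x n -> vpge x m.
Proof. by move=> le_mn; apply: le_trans; rewrite lee_fin. Qed.

Lemma vpgeN x n : vpge x n -> vpge (- x) n.
Proof. by rewrite /vpge vpN. Qed.

Lemma vpgeD x y n : vpge x n -> vpge y n -> vpge (x + y) n.
Proof. by move=> xn yn; apply: le_trans (vpD x y); rewrite le_min xn yn. Qed.

Lemma vpgeB x y n : vpge x n -> vpge y n -> vpge (x - y) n.
Proof. by move=> xn /vpgeN; apply: vpgeD. Qed.

Lemma vpgeM x y m n : vpge x m -> vpge y n -> vpge (x * y) (m + n).
Proof. by move=> xm yn; rewrite /vpge vpM EFinD leeD. Qed.

Lemma vpgeX x n (k : nat) : vpge x n -> vpge (x ^+ k) (n *+ k).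
Proof.
move=> xn; elim: k => [|k IHk]; first by rewrite expr0 mulr0n /vpge vp1.
by rewrite exprS mulrS; apply: vpgeM.
Qed.

Lemma vpge_sum (k : nat) (F : 'I_k -> Qp) n :
  (forall i, vpge (F i) n) -> vpge (\sum_(i < k) F i) n.
Proof. by move=> Fn; elim/big_ind: _ => // [|x y]; [apply: vpge0 | apply: vpgeD]. Qed.

Lemma vpge_lt x c : (c%:E < vp x)%E -> vpge x (c + 1).
Proof.
rewrite /vpge; case: (vp x) => [d| |] //=; last by rewrite leey.
by rewrite lte_fin lee_fin lezD1.
Qed.

Lemma eq0_vpge x : (forall n, vpge x n) -> x = 0.
Proof.
move=> xn; apply/eqP/negPn/negP => /vp_finite[c vx].
by have := xn (c + 1); rewrite (vpgeE _ vx) -ltzD1 ltxx.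
Qed.

Lemma vpD_eql a b c : vp a = c%:E -> vpge b (c + 1) -> vp (a + b) = c%:E.
Proof.
move=> va bc1; have ab_c : vpge (a + b) c.
  by apply: vpgeD; [rewrite (vpgeE _ va) | apply: vpgeW bc1; rewrite lerDl].
have ab_nc1 : ~ vpge (a + b) (c + 1).
  move=> abc1; have : vpge a (c + 1) by rewrite -(addrK b a); apply: vpgeB.
  by rewrite (vpgeE _ va) -ltzD1 ltxx.
have [ab0|/vp_finite[d vab]] := eqVneq (a + b) 0.
  by case: ab_nc1; rewrite ab0; apply: vpge0.
move: ab_c ab_nc1; rewrite !(vpgeE _ vab) vab => le_cd lt_dc.
by congr (_%:E); apply/eqP; rewrite eq_le le_cd andbT -ltzD1 ltNge; apply/negP.
Qed.

Lemma vpge_cancell a y c (k : int) : vp a = c%:E -> vpge (a * y) (c + k) -> vpge y k.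
Proof.
rewrite /vpge vpM => ->; case: (vp y) => [m| |] //=; last by move=> _; rewrite leey.
by rewrite -EFinD !lee_fin lerD2l.
Qed.

Lemma vpge_div0 x y : (vp y <= vp x)%E -> vpge (x / y) 0.
Proof.
have [->|/vp_finite[c vy]] := eqVneq y 0.
  by rewrite invr0 mulr0 => _; apply: vpge0.
rewrite /vpge vpM (vpV vy) vy; case: (vp x) => [d| |] //=.
by rewrite -EFinD !lee_fin subr_ge0.
Qed.

End PadicValuation.

Section PrincipalUnits.
Variables (p : nat) (Qp : padic_field p).
Implicit Types (y z : Qp) (n : int).

Definition principal_unit y := vpge (y - 1) 1.

Lemma principal_unit1 : principal_unit (1 : Qp).
Proof. by rewrite /principal_unit subrr; apply: vpge0. Qed.

Lemma vp_principal_unit y : principal_unit y -> vp y = 0%:E.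
Proof. by move=> y1; rewrite -(subrK 1 y) addrC; apply: vpD_eql; rewrite ?add0r ?vp1. Qed.

Lemma vpge_principal_unit y : principal_unit y -> vpge y 0.
Proof. by move/vp_principal_unit/vpge_vp. Qed.

Lemma principal_unitM y z : principal_unit y -> principal_unit z -> principal_unit (y * z).
Proof.
move=> y1 z1; rewrite /principal_unit (_ : y * z - 1 = y * (z - 1) + (y - 1)).
  apply: vpgeD (y1); apply: vpgeW (vpgeM (vpge_principal_unit y1) z1).
  by rewrite add0r.
by rewrite mulrBr mulr1 addrA subrK.
Qed.

Lemma principal_unitX y (k : nat) : principal_unit y -> principal_unit (y ^+ k).
Proof.
move=> y1; elim: k => [|k IHk]; first by rewrite expr0; apply: principal_unit1.
by rewrite exprS; apply: principal_unitM.
Qed.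

Lemma vp_cvg_geometric (u : nat -> Qp) :
    (forall i : nat, vpge (u i.+1 - u i) i) ->
  exists l, forall n, exists N, forall i, (N <= i)%N -> vpge (u i - l) n.
Proof.
move=> u_step; have u_tail (i k : nat) : vpge (u (i + k)%N - u i) i.
  elim: k => [|k IHk]; first by rewrite addn0 subrr; apply: vpge0.
  rewrite addnS -(subrK (u (i + k)%N) (u (i + k).+1)) -addrA.
  by apply: vpgeD IHk; apply: vpgeW (u_step _); rewrite lez_nat leq_addr.
apply: vp_complete => n; exists `|n|%N => i j le_ni le_nj.
have le_n (k : nat) : (`|n| <= k)%N -> n <= k%:Z.
  by move=> le_nk; apply: le_trans (ler_norm n) _; rewrite -abszE lez_nat.
have [le_ij|/ltnW le_ji] := leqP i j.
- rewrite -opprB; apply: vpgeN; rewrite -(subnKC le_ij).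
  exact: vpgeW (le_n _ le_ni) (u_tail _ _).
- rewrite -(subnKC le_ji); exact: vpgeW (le_n _ le_nj) (u_tail _ _).
Qed.

Lemma principal_unit_fixpoint (F : Qp -> Qp) :
    (forall y, principal_unit y -> principal_unit (F y)) ->
    (forall y z n, principal_unit y -> principal_unit z ->
       vpge (y - z) n -> vpge (F y - F z) (n + 1)) ->
  exists2 l, principal_unit l & F l = l.
Proof.
move=> F_unit F_contr; pose u i := iter i F 1.
have u_unit i : principal_unit (u i).
  by elim: i => [|i IHi]; [apply: principal_unit1 | apply: F_unit].
have u_step (i : nat) : vpge (u i.+1 - u i) i.
  elim: i => [|i IHi]; first exact: vpgeW (F_unit _ principal_unit1).
  by apply: vpgeW (F_contr _ _ _ (u_unit _) (u_unit _) IHi); lia.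
have [l u_cvg] := vp_cvg_geometric u_step.
have [N uN_l] := u_cvg 1.
have l_unit : principal_unit l.
  rewrite /principal_unit (_ : l - 1 = (u N - 1) - (u N - l)); last by ring.
  exact: vpgeB (u_unit N) (uN_l N (leqnn N)).
exists l => //; apply/eqP; rewrite -subr_eq0; apply/eqP/eq0_vpge => n.
have [M uM_l] := u_cvg n.
rewrite (_ : F l - l = (F l - F (u M)) + (u M.+1 - l)); last by rewrite /u /=; ring.
apply: vpgeD; last exact: uM_l (leqnSn M).
apply: vpgeW (lerDl n 1) _; apply: F_contr l_unit (u_unit M) _.
by rewrite -opprB; apply: vpgeN; apply: uM_l.
Qed.

End PrincipalUnits.

Section PointwiseContinuity.
Variables (p : nat) (Qp : padic_field p) (X : topologicalType) (x : X).
Implicit Types (f g s : X -> Qp) (n : int).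

Definition pcont_at f := forall n, \forall y \near x, vpge (f y - f x) n.

Lemma pcont_at_cst (c : Qp) : pcont_at (fun=> c).
Proof. by move=> n; apply: nearW => y; rewrite subrr; apply: vpge0. Qed.

Lemma pcont_atD f g : pcont_at f -> pcont_at g -> pcont_at (fun y => f y + g y).
Proof.
move=> fx gx n; apply: filterS2 (fx n) (gx n) => y fyn gyn.
by rewrite opprD addrACA; apply: vpgeD.
Qed.

Lemma pcont_at_bounded f : pcont_at f -> exists k, \forall y \near x, vpge (f y) k.
Proof.
move=> fx; have [k fxk] := vpge_exists (f x); exists k.
by apply: filterS (fx k) => y fyk; rewrite -(subrK (f x) (f y)); apply: vpgeD.
Qed.

Lemma pcont_atM f g : pcont_at f -> pcont_at g -> pcont_at (fun y => f y * g y).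
Proof.
move=> fx gx n; have [kg gy_kg] := pcont_at_bounded gx.
have [kf fx_kf] := vpge_exists (f x).
apply: filterS3 (fx (n - kg)) gy_kg (gx (n - kf)) => y fy_n gy gy_n.
rewrite (_ : _ - _ = (f y - f x) * g y + f x * (g y - g x)); last by ring.
apply: vpgeD; first by apply: vpgeW (vpgeM fy_n gy); rewrite subrK.
by apply: vpgeW (vpgeM fx_kf gy_n); rewrite addrC subrK.
Qed.

Lemma pcont_atX f (k : nat) : pcont_at f -> pcont_at (fun y => f y ^+ k).
Proof.
move=> fx; elim: k => [|k IHk]; first exact: pcont_at_cst.
rewrite (_ : (fun y => _) = (fun y => f y * f y ^+ k)); last first.
  by apply: funext => y; rewrite exprS.
exact: pcont_atM.
Qed.

Lemma pcont_atV g : pcont_at g -> g x != 0 -> pcont_at (fun y => (g y)^-1).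
Proof.
move=> gx gx_neq0 n; have [c vgx] := vp_finite gx_neq0.
apply: filterS2 (gx (c + 1)) (gx (n + c + c)) => y gy_c1 gy_n.
have vgy : vp (g y) = c%:E by rewrite -(subrK (g x) (g y)) addrC; apply: vpD_eql.
have gy_neq0 : g y != 0 by rewrite -vp_eq_pinfty vgy.
rewrite (_ : _ - _ = - (g y - g x) * ((g y)^-1 * (g x)^-1)); last by field; apply/andP.
apply: vpgeW (vpgeM (vpgeN gy_n) (vpgeM (vpge_vp (vpV vgy)) (vpge_vp (vpV vgx)))).
lia.
Qed.

Lemma pcont_atMl_eq0 g s : pcont_at g -> g x = 0 -> (forall y, vpge (s y) 0) ->
  pcont_at (fun y => g y * s y).
Proof.
move=> gx gx0 s_ge0 n; apply: filterS (gx n) => y; rewrite gx0 mul0r !subr0 => gy_n.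
by apply: vpgeW (vpgeM gy_n (s_ge0 y)); rewrite addr0.
Qed.

End PointwiseContinuity.

Section PrincipalRoots.
Variables (p : nat) (Qp : padic_field p) (q : nat).
Hypotheses (q_gt0 : (0 < q)%N) (p_coprime_q : coprime p q).
Implicit Types (y z a : Qp) (n : int).

Lemma vp_natr_coprime : vp (q%:R : Qp) = 0%:E.
Proof. by rewrite vp_natr // logn_coprime. Qed.

Let geom y z := \sum_(i < q) y ^+ (q.-1 - i) * z ^+ i.

Lemma vpge_natr_sub_geom y z :
  principal_unit y -> principal_unit z -> vpge (q%:R - geom y z) 1.
Proof.
move=> y1 z1; rewrite -[q in q%:R]card_ord -sumr_const /geom -sumrB.
apply: vpge_sum => i; rewrite -opprB; apply: vpgeN.
exact: principal_unitM (principal_unitX _ y1) (principal_unitX _ z1).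
Qed.

Lemma vp_geom y z : principal_unit y -> principal_unit z -> vp (geom y z) = 0%:E.
Proof.
move=> y1 z1; rewrite -(subrK q%:R (geom y z)) addrC.
apply: vpD_eql vp_natr_coprime _; rewrite -opprB add0r.
exact/vpgeN/vpge_natr_sub_geom.
Qed.

Lemma vpge_sub_principal_root y z n : principal_unit y -> principal_unit z ->
  vpge (y ^+ q - z ^+ q) n -> vpge (y - z) n.
Proof.
move=> y1 z1 yz_n; apply: (vpge_cancell (vp_geom y1 z1)).
by rewrite add0r mulrC -subrXX.
Qed.

Lemma principal_unit_root a : principal_unit a -> exists2 y, principal_unit y & y ^+ q = a.
Proof.
move=> a1; have q_neq0 : (q%:R : Qp) != 0 by rewrite -vp_eq_pinfty vp_natr_coprime.
have q_inv_ge0 : vpge (q%:R : Qp)^-1 0.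
  by rewrite (vpgeE _ (vpV vp_natr_coprime)) oppr0.
(* Newton's map for [y ^+ q = a] with the derivative frozen at [y = 1]: it contracts by the
   factor [(q - geom y z) / q], which lies in [p Z_p]. *)
pose F y := y - (y ^+ q - a) / q%:R.
have F_unit y : principal_unit y -> principal_unit (F y).
  move=> y1; rewrite /principal_unit /F.
  rewrite (_ : _ - 1 = (y - 1) - ((y ^+ q - 1) - (a - 1)) / q%:R); last by ring.
  apply: vpgeB (y1) _; apply: vpgeW (vpgeM _ q_inv_ge0); first by rewrite addr0.
  exact: vpgeB (principal_unitX _ y1) a1.
have F_contr y z n : principal_unit y -> principal_unit z ->
    vpge (y - z) n -> vpge (F y - F z) (n + 1).
  move=> y1 z1 yz_n; rewrite (_ : F y - F z = (y - z) * ((q%:R - geom y z) / q%:R)).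
    apply: vpgeW (vpgeM yz_n (vpgeM (vpge_natr_sub_geom y1 z1) q_inv_ge0)).
    by rewrite addr0.
  rewrite /F; have -> : y ^+ q = z ^+ q + (y - z) * geom y z.
    by rewrite -subrXX addrC subrK.
  by field.
have [y y1 Fy] := principal_unit_fixpoint F_unit F_contr.
exists y => //; apply/eqP; move/eqP: Fy.
rewrite /F subr_eq addrC -subr_eq subrr eq_sym mulf_eq0 invr_eq0 (negbTE q_neq0) orbF.
by rewrite subr_eq0.
Qed.

Lemma pcont_at_principal_root (X : topologicalType) (x : X) (a s : X -> Qp) :
    (forall t, principal_unit (s t)) -> (forall t, s t ^+ q = a t) ->
  pcont_at x a -> pcont_at x s.
Proof.
move=> s1 sa ax n; apply: filterS (ax n) => t; rewrite -!sa.
exact: vpge_sub_principal_root.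
Qed.

Lemma principal_root_fun : exists r : Qp -> Qp,
  forall a, principal_unit a -> principal_unit (r a) /\ r a ^+ q = a.
Proof.
have /choice[r rP] a : exists y, principal_unit a -> principal_unit y /\ y ^+ q = a.
  have [/principal_unit_root[y y1 ya]|a_not1] := pselect (principal_unit a).
    by exists y.
  by exists 0 => /a_not1.
by exists r.
Qed.

End PrincipalRoots.

Lemma mulrn_neq_1Dmulrn (m c : int) (q : nat) : (1 < q)%N -> m *+ q != 1 + c *+ q.
Proof.
move=> q_gt1; apply/eqP => /(congr1 (fun z => z - c *+ q)).
rewrite addrK -mulrnBl -mulr_natr natz => mcq.
have := dvdz_mull (m - c) (dvdzz q); rewrite mcq dvdz1 absz_nat => /eqP q1.
by rewrite q1 in q_gt1.
Qed.

Section QthPowers.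
Variables (p : nat) (Qp : padic_field p) (q : nat).
Hypotheses (p_prime : prime p) (q_gt1 : (1 < q)%N).

Lemma vp_le_of_expr_eq (h g f : Qp) :
  h ^+ q = g ^+ q + p%:R * f ^+ q -> (vp g <= vp f)%E.
Proof.
move=> hE; rewrite leNgt; apply/negP => lt_fg.
have f_neq0 : f != 0 by apply/eqP => f0; move: lt_fg; rewrite f0 vp0 ltNge leey.
have [c vf] := vp_finite f_neq0.
have vpf : vp (p%:R * f ^+ q) = (1 + c *+ q)%:E.
  by rewrite vpM (vp_natr_prime _ p_prime) (vpX _ vf) -EFinD.
have gq : vpge (g ^+ q) (1 + c *+ q + 1).
  rewrite vf in lt_fg; apply: vpgeW (vpgeX q (vpge_lt lt_fg)).
  rewrite mulrnDl natz; set C := c *+ q; lia.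
have vph : vp (h ^+ q) = (1 + c *+ q)%:E by rewrite hE addrC; apply: vpD_eql.
have h_neq0 : h != 0.
  by apply/eqP => h0; move: vph; rewrite h0 expr0n gtn_eqF ?vp0 // ltnW.
have [m vh] := vp_finite h_neq0.
by move: vph; rewrite (vpX _ vh) => -[]; apply/eqP/mulrn_neq_1Dmulrn.
Qed.

Lemma principal_unit_1DpX (x : Qp) : vpge x 0 -> principal_unit (1 + p%:R * x ^+ q).
Proof.
move=> x0; rewrite /principal_unit addrAC subrr add0r.
apply: vpgeW (vpgeM (vpge_vp (vp_natr_prime _ p_prime)) (vpgeX q x0)).
by rewrite mul0rn addr0.
Qed.

Lemma scaled_root_expr (f g r : Qp) : (vp g <= vp f)%E ->
  r ^+ q = 1 + p%:R * (f / g) ^+ q -> (g * r) ^+ q = g ^+ q + p%:R * f ^+ q.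
Proof.
move=> le_gf rE; rewrite exprMn rE; have [g0|g_neq0] := eqVneq g 0.
  have /eqP f0 : f == 0 by rewrite -vp_eq_pinfty -leye_eq -(vp0 Qp) -g0.
  by rewrite g0 f0 !expr0n gtn_eqF ?(ltnW q_gt1) // !mulr0 mul0r addr0.
by rewrite expr_div_n; field; rewrite expf_neq0.
Qed.
End QthPowers.

Theorem proposition4p7 (p : nat) (Qp : padic_field p) (X : topologicalType)
  (q : nat) :
  prime p -> compact [set: X] -> prime q -> q != p ->
  forall f g : X -> Qp, pcont f -> pcont g ->
  (pdivides g f <->
   exists h : X -> Qp, pcont h /\
     forall x : X, h x ^+ q = g x ^+ q + p%:R * f x ^+ q).
Proof.
move=> p_prime _ q_prime q_neq_p f g f_cont g_cont.
have q_gt1 := prime_gt1 q_prime; have q_gt0 := prime_gt0 q_prime.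
have p_coprime_q : coprime p q by rewrite prime_coprime // dvdn_prime2 // eq_sym.
split=> [g_dvd_f | [h [_ hE]] x]; last exact: (vp_le_of_expr_eq p_prime q_gt1 (hE x)).
have [r r_root] := principal_root_fun Qp q_gt0 p_coprime_q.
pose s y := r (1 + p%:R * (f y / g y) ^+ q).
have s_root y : principal_unit (s y) /\ s y ^+ q = 1 + p%:R * (f y / g y) ^+ q.
  by apply/r_root/principal_unit_1DpX/vpge_div0/g_dvd_f.
exists (fun y => g y * s y); split=> [x|x]; last first.
  exact: scaled_root_expr (g_dvd_f x) (s_root x).2.
(* At a zero of [g] the factor [s] may jump, but it stays bounded. *)
have [gx0|gx_neq0] := eqVneq (g x) 0.
  by apply: pcont_atMl_eq0 (g_cont x) gx0 _ => y; apply: vpge_principal_unit (s_root y).1.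
apply: pcont_atM (g_cont x) _.
apply: (pcont_at_principal_root q_gt0 p_coprime_q (fun y => (s_root y).1)
                                                   (fun y => (s_root y).2)).
have fg_cont := pcont_atM (f_cont x) (pcont_atV (g_cont x) gx_neq0).
exact: pcont_atD (pcont_at_cst x 1)
  (pcont_atM (pcont_at_cst x p%:R) (pcont_atX q fg_cont)).
Qed.
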